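(* Let $q$ be a prime power. For any real $R$ with $0 \leq R \leq \frac{1}{2}\log_q\!\left(\frac{q^2}{q^2-q+1}\right)$, there exists an infinite sequence of minimal linear $[n,k]$ codes over $\mathbb{F}_q$ (with lengths $n$ unbounded) whose rates $k/n$ attain $R$ (i.e. $k/n \to R$ along the sequence, with $k/n \le \frac{1}{2}\log_q\!\left(\frac{q^2}{q^2-q+1}\right)$).
   Context: A linear $[n,k]$ code over $\mathbb{F}_q$ is a $k$-dimensional subspace of $\mathbb{F}_q^n$; its rate is $k/n$. The support of $c \in \mathbb{F}_q^n$ is $\mathrm{supp}(c) = \{ i \in \{1,\dots,n\} : c_i \neq 0\}$. A codeword $c \in C$ is minimal if for every $c' \in C$, $\mathrm{supp}(c') \subseteq \mathrm{supp}(c)$ implies that $c$ and $c'$ are linearly dependent. A linear code $C$ is minimal if every nonzero codeword of $C$ is minimal. *)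

From HB Require Import structures.
From mathcomp Require Import all_boot all_order all_algebra.
From mathcomp Require Import all_classical all_reals all_analysis.
Set Implicit Arguments. Unset Strict Implicit. Unset Printing Implicit Defensive.
Import Order.TTheory GRing.Theory Num.Theory.
Local Open Scope ring_scope.

Definition supp (F : fieldType) (n : nat) (c : 'rV[F]_n) : {set 'I_n} :=
  [set i | c 0 i != 0].

Definition lin_dep (F : fieldType) (n : nat) (c c' : 'rV[F]_n) : Prop :=
  exists a b : F, ((a != 0) || (b != 0)) /\ a *: c + b *: c' = 0.

Definition minimal_codeword (F : fieldType) (n : nat)
    (C : {vspace 'rV[F]_n}) (c : 'rV[F]_n) : Prop :=
  c \in C /\
  forall c' : 'rV[F]_n, c' \in C -> supp c' \subset supp c -> lin_dep c c'.

Definition minimal_code (F : fieldType) (n : nat) (C : {vspace 'rV[F]_n}) : Prop :=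
  forall c : 'rV[F]_n, c \in C -> c != 0 -> minimal_codeword C c.

Definition rate (T : realType) (F : fieldType) (n : nat) (C : {vspace 'rV[F]_n}) : T :=
  (\dim C)%:R / n%:R.

Definition logb (T : realType) (q x : T) : T := ln x / ln q.

Definition rate_bound (T : realType) (q : nat) : T :=
  2^-1 * logb q%:R ((q%:R ^+ 2) / (q%:R ^+ 2 - q%:R + 1)).

From HB Require Import structures.
From mathcomp Require Import all_boot all_order all_algebra.
From mathcomp Require Import all_classical all_reals all_analysis.
From mathcomp Require Import ring lra zify.
Set Implicit Arguments. Unset Strict Implicit. Unset Printing Implicit Defensive.
Import Order.TTheory GRing.Theory Num.Theory.
Import numFieldNormedType.Exports.
Local Open Scope ring_scope.

(* The code generated by the rows of a k x n matrix G is minimal of dimension k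
   unless G is degenerate: either uG = 0 for some u <> 0, or supp (vG) is
   contained in supp (uG) for some independent u, v.  For a fixed row-free M
   the columns g of a random G are independent and M g is uniform, so for a
   pair (u, v) each column avoids the event "(u.g = 0 and v.g <> 0)" with
   probability (q^2 - q + 1) / q^2.  A union bound over the at most q^(2k)
   pairs and q^k single vectors shows that a nondegenerate G exists once
   q^(k + n) + q^(2k) (q^2 - q + 1)^n < q^(2n), which follows from
   k + 1 <= n * rate_bound q.  Choosing k = floor (n R) - 1 gives rates k / n
   converging to R. *)

Lemma leq_card_bigcup (I T : finType) (P : pred I) (A : I -> {set T}) :
  (#|\bigcup_(i | P i) A i| <= \sum_(i | P i) #|A i|)%N.
Proof.
elim/big_rec2: _ => [|i B s _ IH]; first by rewrite cards0.
by rewrite (leq_trans (leq_card_setU _ _)) // leq_add2l.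
Qed.

Section LinearCodes.
Variable F : fieldType.

Lemma lin_dep_rows_of_not_row_free n (M : 'M[F]_(2, n)) :
  ~~ row_free M -> lin_dep (row 0 M) (row 1 M).
Proof.
rewrite -kermx_eq0 => /rowV0Pn[w /sub_kermxP wM w0].
exists (w 0 0), (w 0 1); split.
  apply: contraR w0; rewrite negb_or !negbK => /andP[/eqP w0_0 /eqP w0_1].
  apply/eqP/rowP => i; rewrite mxE.
  have [->|->] : i = 0 \/ i = 1 by case: i => -[|[|//]] ?; [left | right]; apply: val_inj.
    by rewrite w0_0.
  by rewrite w0_1.
rewrite -wM mulmx_sum_row !big_ord_recl big_ord0 addr0.
by rewrite (_ : lift ord0 ord0 = 1 :> 'I_2) //; apply: val_inj.
Qed.

Lemma lin_dep_mulmxr m n (G : 'M[F]_(m, n)) (u v : 'rV[F]_m) :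
  lin_dep u v -> lin_dep (u *m G) (v *m G).
Proof.
by case=> a [b [ab uv]]; exists a, b; rewrite !scalemxAl -mulmxDl uv mul0mx.
Qed.

Lemma minimal_code0 n : minimal_code (0%VS : {vspace 'rV[F]_n}).
Proof. by move=> c; rewrite memv0 => /eqP->; rewrite eqxx. Qed.

Lemma mulmx_col_entry m k n (M : 'M[F]_(m, k)) (G : 'M[F]_(k, n)) i j :
  (M *m col j G) i 0 = (row i M *m G) 0 j.
Proof. by rewrite !mxE; apply: eq_bigr => l _; rewrite !mxE. Qed.

Definition generated_code k n (G : 'M[F]_(k, n)) : {vspace 'rV[F]_n} :=
  limg (linfun (mulmxr G) : 'Hom('rV[F]_k, 'rV[F]_n)).

Lemma generated_codeP k n (G : 'M[F]_(k, n)) c :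
  reflect (exists u, c = u *m G) (c \in generated_code G).
Proof.
apply: (iffP memv_imgP) => [[u _ ->]|[u ->]]; exists u; rewrite ?memvf //.
all: by rewrite lfunE.
Qed.

End LinearCodes.

Section GeneratorCounting.
Variable F : finFieldType.
Local Notation q := #|F|.

Lemma card_preimage_row_free m k (M : 'M[F]_(m, k)) (S : pred 'cV[F]_m) :
  row_free M ->
  (#|[pred g : 'cV[F]_k | M *m g \in S]| * q ^ m = #|S| * q ^ k)%N.
Proof.
case/row_freeP=> B MB.
pose K := [pred g : 'cV[F]_k | M *m g == 0].
pose split_ker (g : 'cV[F]_k) := (M *m g, g - B *m (M *m g)).
have split_inj : injective split_ker.
  move=> g1 g2 [e1]; rewrite e1 => /(congr1 (+%R^~ (B *m (M *m g2)))).
  by rewrite !subrK.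
have fiberE (S' : pred 'cV[F]_m) :
    #|[pred g : 'cV[F]_k | M *m g \in S']| = (#|S'| * #|K|)%N.
  rewrite -(card_imset (mem [pred g | M *m g \in S']) split_inj).
  rewrite -[#|S'|]cardsE -[#|K|]cardsE -cardsX; apply: eq_card => -[s h].
  rewrite !inE /=; apply/imsetP/andP => [[g gS [-> ->]]|[sS /eqP hK]].
    by split=> //; rewrite mulmxBr mulmxA MB mul1mx subrr.
  have MgE : M *m (B *m s + h) = s by rewrite mulmxDr mulmxA MB mul1mx hK addr0.
  exists (B *m s + h); first by rewrite unfold_in /= MgE.
  by rewrite /split_ker MgE addrAC subrr add0r.
have := fiberE predT; rewrite (fiberE S).
have -> : #|[pred g : 'cV[F]_k | M *m g \in predT]| = #|{: 'cV[F]_k}| by apply: eq_card.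
rewrite cardT card_mx !muln1 => /= totalE.
by rewrite -mulnA [(_ * q ^ m)%N]mulnC -totalE -cardT card_mx muln1.
Qed.

Lemma card_cols_in k n (A : pred 'cV[F]_k) :
  #|[pred G : 'M[F]_(k, n) | [forall j, col j G \in A]]| = (#|A| ^ n)%N.
Proof.
pose mk (f : {ffun 'I_n -> 'cV[F]_k}) : 'M[F]_(k, n) := \matrix_(i, j) f j i 0.
have mk_inj : injective mk.
  move=> f1 f2 e; apply/ffunP => j; apply/matrixP => i z.
  by rewrite ord1; have := congr1 (fun M : 'M[F]_(k, n) => M i j) e; rewrite !mxE.
rewrite -[X in (_ ^ X)%N]card_ord -card_ffun_on -(card_imset _ mk_inj).
apply: eq_card => G; rewrite inE /=; apply/forallP/imsetP => [H|[f fA ->] j].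
  exists [ffun j => col j G]; first by apply/ffun_onP => j; rewrite ffunE; apply: H.
  by apply/matrixP => i j; rewrite !mxE ffunE mxE.
have -> : col j (mk f) = f j by apply/matrixP => i z; rewrite ord1 !mxE.
exact: (ffun_onP fA).
Qed.

Definition cols_mapped_in m k n (M : 'M[F]_(m, k)) (S : pred 'cV[F]_m)
    (G : 'M[F]_(k, n)) : bool :=
  [forall j, M *m col j G \in S].

Lemma card_cols_mapped_in m k n (M : 'M[F]_(m, k)) (S : pred 'cV[F]_m) :
  row_free M ->
  (#|[set G : 'M[F]_(k, n) | cols_mapped_in M S G]| * q ^ (m * n)
    = (#|S| * q ^ k) ^ n)%N.
Proof.
move=> freeM.
have -> : #|[set G : 'M[F]_(k, n) | cols_mapped_in M S G]|
        = #|[pred G : 'M[F]_(k, n) | [forall j, col j G \in [pred g | M *m g \in S]]]|.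
  by apply: eq_card => G; rewrite inE.
by rewrite card_cols_in mulnC expnM -expnMn mulnC card_preimage_row_free.
Qed.

Lemma card_bigcup_cols_mapped_in m k n (S : pred 'cV[F]_m) :
  (#|\bigcup_(M : 'M[F]_(m, k) | row_free M) [set G : 'M[F]_(k, n) | cols_mapped_in M S G]|
     * q ^ (m * n) <= q ^ (m * k) * (#|S| * q ^ k) ^ n)%N.
Proof.
apply: leq_trans (leq_mul (leq_card_bigcup _ _) (leqnn _)) _.
rewrite big_distrl /= (eq_bigr _ (fun M => card_cols_mapped_in n S)).
by rewrite sum_nat_cond_const -card_mx leq_mul2r max_card orbT.
Qed.

Definition nested_supp : pred 'cV[F]_2 :=
  [pred h : 'cV[F]_2 | (h 0 0 == 0) ==> (h 1 0 == 0)].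

Lemma card_nested_supp : (#|nested_supp| = q * q - q + 1)%N.
Proof.
pose e1 (a : F) : 'cV[F]_2 := \col_i (if i == 0 then 0 else a).
have e1_inj : injective e1 by move=> a b /matrixP/(_ 1 0); rewrite !mxE.
have notinE : [predC nested_supp] =i e1 @: [set~ 0].
  move=> h; rewrite !inE /=; apply/idP/imsetP => [|[a a0 ->]]; last first.
    by rewrite !inE in a0; rewrite !mxE /= eqxx (negbTE a0).
  rewrite negb_imply => /andP[/eqP h0 h1]; exists (h 1 0); first by rewrite !inE.
  apply/matrixP => i j; rewrite ord1 !mxE.
  by case: i => -[|[|//]] ? /=; [rewrite -h0|]; congr (h _ _); apply: val_inj.
have := cardC nested_supp; rewrite (eq_card notinE) card_imset // cardsC1.
rewrite card_mx muln1 -mulnn -subn1.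
(* The cardinals occur under different but convertible instance paths;
   generalizing identifies them for nia. *)
move: (card_finNzRing_gt1 F); move: #|nested_supp| #|F| => a b; nia.
Qed.

(* The rows (u, v) of a row-free 2 x k matrix M are an independent pair, and
   nested_supp holding on every column of M G says supp (vG) \subset supp (uG). *)
Definition degenerate_generators k n : {set 'M[F]_(k, n)} :=
  (\bigcup_(u : 'M[F]_(1, k) | row_free u) [set G | cols_mapped_in u (pred1 0) G])
  :|: \bigcup_(M : 'M[F]_(2, k) | row_free M) [set G | cols_mapped_in M nested_supp G].

Lemma generated_code_minimal k n (G : 'M[F]_(k, n)) :
  G \notin degenerate_generators k n ->
  minimal_code (generated_code G) /\ \dim (generated_code G) = k.
Proof.
rewrite inE negb_or => /andP[injG nestedG].
have uG_neq0 (u : 'rV[F]_k) : u != 0 -> u *m G != 0.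
  move=> u0; apply: contra injG => /eqP uG0; apply/bigcupP; exists u.
    by rewrite /row_free rank_rV u0.
  by rewrite inE; apply/forallP => j; rewrite inE /= colE mulmxA uG0 mul0mx.
split; last first.
  have f_inj : injective (linfun (mulmxr G) : 'Hom('rV[F]_k, 'rV[F]_n)).
    move=> x y; rewrite !lfunE /= => /eqP; rewrite -subr_eq0 -mulmxBl.
    by apply: contraTeq => xy; apply: uG_neq0; rewrite subr_eq0.
  rewrite limg_dim_eq ?dimvf; last by rewrite capfv; apply/eqP/lker0P.
  by rewrite /dim /= mul1n.
move=> _ /generated_codeP[u ->] uG0; split; first by apply/generated_codeP; exists u.
move=> _ /generated_codeP[v ->] supp_vu.
pose M := \matrix_(i < 2) (if i == 0 then u else v).
suff : lin_dep (row 0 M *m G) (row 1 M *m G) by rewrite !rowK.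
apply/lin_dep_mulmxr/lin_dep_rows_of_not_row_free; apply: contra nestedG => freeM.
apply/bigcupP; exists M; rewrite // inE; apply/forallP => j; rewrite inE /=.
rewrite !mulmx_col_entry !rowK /=; apply/implyP => uGj0; apply: contraLR uGj0 => vGj.
by have := fintype.subsetP supp_vu j; rewrite !inE; apply.
Qed.

Lemma card_degenerate_generators k n :
  (#|degenerate_generators k n| * q ^ (2 * n)
     <= (q ^ (k + n) + q ^ (2 * k) * (q * q - q + 1) ^ n) * q ^ (k * n))%N.
Proof.
apply: leq_trans (leq_mul (leq_card_setU _ _) (leqnn _)) _.
rewrite !mulnDl leq_add //.
  have := card_bigcup_cols_mapped_in k n (pred1 (0 : 'cV[F]_1)).
  rewrite card1 !mul1n -expnM mul2n -addnn !expnD.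
  move: #|_| (q ^ n)%N (q ^ k)%N (q ^ (k * n))%N => b x y z; nia.
have := card_bigcup_cols_mapped_in k n nested_supp.
by rewrite card_nested_supp expnMn -expnM mulnA.
Qed.

Lemma exists_nondegenerate_generator k n :
  (q ^ (k + n) + q ^ (2 * k) * (q * q - q + 1) ^ n < q ^ (2 * n))%N ->
  exists G : 'M[F]_(k, n), G \notin degenerate_generators k n.
Proof.
move=> count_lt.
suff /fintype.subsetPn[G _ G_good] :
    ~~ ([set: 'M[F]_(k, n)] \subset degenerate_generators k n) by exists G.
apply: contraL count_lt => /subset_leq_card; rewrite cardsT card_mx => all_bad.
have qkn_gt0 : (0 < q ^ (k * n))%N by rewrite expn_gt0 ltnW ?card_finNzRing_gt1.
rewrite -leqNgt -(leq_pmul2r qkn_gt0).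
apply: leq_trans (card_degenerate_generators k n); rewrite mulnC leq_mul2r.
by rewrite all_bad orbT.
Qed.

End GeneratorCounting.

Lemma expn_sum_lt_of_le (q c k n : nat) : (1 < q)%N -> (0 < c)%N ->
  (q ^ (2 * k.+1) * c ^ n <= q ^ (2 * n))%N ->
  (q ^ (k + n) + q ^ (2 * k) * c ^ n < q ^ (2 * n))%N.
Proof.
move=> q_gt1 c_gt0 le_Q.
have cn_gt0 : (0 < c ^ n)%N by rewrite expn_gt0 c_gt0.
have k_lt_n : (k < n)%N.
  have : (q ^ (2 * k.+1) <= q ^ (2 * n))%N by apply: leq_trans le_Q; rewrite leq_pmulr.
  by rewrite leq_exp2l //; lia.
have A_le : (4 * (q ^ (2 * k) * c ^ n) <= q ^ (2 * n))%N.
  apply: leq_trans le_Q; rewrite mulnA leq_mul2r mulnS expnD; apply/orP; right.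
  by rewrite leq_mul2r (leq_mul q_gt1 q_gt1) orbT.
have B_le : (2 * q ^ (k + n) <= q ^ (2 * n))%N.
  apply: leq_trans (_ : q * q ^ (k + n) <= _)%N; first by rewrite leq_mul2r q_gt1 orbT.
  by rewrite -expnS leq_exp2l //; lia.
have A_gt0 : (0 < q ^ (2 * k) * c ^ n)%N by rewrite muln_gt0 expn_gt0 ltnW.
lia.
Qed.

Lemma expn_le_of_rate_le (T : realType) (q k n : nat) : (1 < q)%N ->
  (k.+1)%:R <= n%:R * rate_bound T q ->
  (q ^ (2 * k.+1) * (q * q - q + 1) ^ n <= q ^ (2 * n))%N.
Proof.
move=> q_gt1 rate_le.
set Q : T := q%:R; set c : T := Q ^+ 2 - Q + 1.
have Q_gt1 : 1 < Q by rewrite ltr1n.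
have Q_gt0 : 0 < Q := lt_trans ltr01 Q_gt1.
have cE : c = (q * q - q + 1)%:R.
  by rewrite natrD natrB ?natrM ?expr2 // leq_pmulr // ltnW.
have c_gt0 : 0 < c by rewrite cE ltr0n addn1.
have L_gt0 : 0 < ln Q by rewrite ln_gt0.
have rate_boundE : rate_bound T q = (2 * ln Q - ln c) / (2 * ln Q).
  rewrite /rate_bound /logb -/Q -/c ln_div ?posrE ?exprn_gt0 // lnXn //.
  by field; rewrite gt_eqF.
rewrite rate_boundE mulrA ler_pdivlMr ?mulr_gt0 // in rate_le.
rewrite -(ler_nat T) !natrM !natrX -cE -/Q.
have Qc_gt0 : 0 < Q ^+ (2 * k.+1) * c ^+ n by rewrite mulr_gt0 // exprn_gt0.
rewrite -ler_ln ?posrE // ?exprn_gt0 // lnM ?posrE ?exprn_gt0 // !lnXn //.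
set L := ln Q in rate_le *; set Lc := ln c in rate_le *.
rewrite -[L *+ (2 * k.+1)]mulr_natl -[Lc *+ n]mulr_natl -[L *+ (2 * n)]mulr_natl !natrM.
nra.
Qed.

Lemma exists_minimal_code (T : realType) (F : finFieldType) (k n : nat) :
  (k.+1)%:R <= n%:R * rate_bound T #|F| ->
  exists C : {vspace 'rV[F]_n}, minimal_code C /\ \dim C = k.
Proof.
move=> rate_le.
have q_gt1 := card_finNzRing_gt1 F.
have [|G G_good] := @exists_nondegenerate_generator F k n.
  apply: expn_sum_lt_of_le => //; first by rewrite addn1.
  exact: expn_le_of_rate_le rate_le.
by exists (generated_code G); apply: generated_code_minimal.
Qed.

Lemma truncn_pred_bounds (R : archiRealFieldType) (x : R) : 0 <= x ->
  (Num.truncn x).-1%:R <= x /\ x - 2 <= (Num.truncn x).-1%:R.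
Proof.
move=> x_ge0; have /andP[] := truncn_itv x_ge0.
case: (Num.truncn x) => [|t] /=; rewrite -?natr1 => t_le x_lt.
  by split=> //; lra.
by split; lra.
Qed.

Local Open Scope classical_set_scope.

Lemma cvg_ratio_of_bounded_error (T : realType) (R c : T) (k : nat -> nat) :
  (forall i, `|(i.+1)%:R * R - (k i)%:R| <= c) ->
  (fun i => (k i)%:R / (i.+1)%:R) @ \oo --> R.
Proof.
move=> err_le; apply/cvgrPdist_le => e e_gt0.
apply: filterS (nbhs_infty_gtr (c / e)) => i /= ce_lt.
have n_gt0 : 0 < (i.+1)%:R :> T by rewrite ltr0n.
have -> : R - (k i)%:R / (i.+1)%:R = ((i.+1)%:R * R - (k i)%:R) / (i.+1)%:R.
  by field; rewrite gt_eqF.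
rewrite normrM normfV (gtr0_norm n_gt0) ler_pdivrMr // (le_trans (err_le i)) //.
rewrite ltr_pdivrMr // in ce_lt.
by rewrite mulrC (le_trans (ltW ce_lt)) // ler_wpM2r ?ler_nat // ltW.
Qed.

Theorem mainTheorem2 (T : realType) (F : finFieldType) (R : T) :
  0 <= R -> R <= rate_bound T #|F| ->
  exists (n : nat -> nat) (C : forall i : nat, {vspace 'rV[F]_(n i)}),
    {homo n : i j / (i < j)%N} /\
    (forall i, minimal_code (C i)) /\
    (forall i, rate T (C i) <= rate_bound T #|F|) /\
    ((fun i => rate T (C i)) @ \oo --> R).
Proof.
move=> R_ge0 R_le.
pose t i := Num.truncn ((i.+1)%:R * R).
have t_pred_bounds i : (t i).-1%:R <= (i.+1)%:R * R /\ (i.+1)%:R * R - 2 <= (t i).-1%:R.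
  exact/truncn_pred_bounds/mulr_ge0.
have codes i : exists C : {vspace 'rV[F]_i.+1}, minimal_code C /\ \dim C = (t i).-1.
  have [t0|t_gt0] := posnP (t i).
    by exists 0%VS; rewrite t0 dimv0; split=> //; apply: minimal_code0.
  apply: exists_minimal_code; rewrite prednK //.
  have /andP[t_le _] := truncn_itv (mulr_ge0 (ler0n T i.+1) R_ge0).
  exact: le_trans t_le (ler_wpM2l (ler0n _ _) R_le).
pose C i := sval (cid (codes i)).
have [C_min C_dim] : (forall i, minimal_code (C i)) /\ forall i, \dim (C i) = (t i).-1.
  by split=> i; have [] := svalP (cid (codes i)).
exists (fun i => i.+1), C; split=> //; split=> //; split.
  move=> i; rewrite /rate C_dim ler_pdivrMr ?ltr0n // mulrC.
  exact: le_trans (t_pred_bounds i).1 (ler_wpM2l (ler0n _ _) R_le).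
under eq_fun do rewrite /rate C_dim.
apply: (@cvg_ratio_of_bounded_error _ _ 2) => i.
by have [] := t_pred_bounds i; rewrite ler_norml; lra.
Qed.
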